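(* Let $G$ be a graph on $d+2$ vertices and $k > 1$. Then $G$ is representable in $\mathbb{R}^d$ with ratio $k$ if and only if both of the following hold: (1) $w^T B_G(k) w \geq 0$ for all $w \in \mathbf{1}^{\perp}$; (2) there exists a nonzero vector $w \in \mathbf{1}^{\perp}$ and a real number $\gamma$ such that $B_G(k) w = \gamma \mathbf{1}$.
   Context: Graphs are finite and simple with vertices labeled $1,\dots,d+2$. A finite set $S \subset \mathbb{R}^d$ is a 2-distance set if $\{\|p-q\| : p,q \in S, p\neq q\}$ has exactly two elements $\alpha_1 > \alpha_2$; its distance ratio is $k=\alpha_1/\alpha_2$. Its associated graph has vertex set $S$ with $p,q$ adjacent iff $\|p-q\|=\alpha_1$. $G$ is representable in $\mathbb{R}^d$ with ratio $k$ if some 2-distance set in $\mathbb{R}^d$ with distance ratio $k$ has associated graph $G$. $B_G(k)$ is the $(d+2)\times(d+2)$ matrix with entries $b_{ii}=0$, $b_{ij} = -1$ if $i\neq j$ and $\{i,j\}$ is not an edge, and $b_{ij} = -k^2$ if $\{i,j\}$ is an edge. $\mathbf{1}$ is the all-ones vector and $\mathbf{1}^{\perp}$ its orthogonal complement. *)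

From mathcomp Require Import all_boot all_order all_algebra reals.
Set Implicit Arguments. Unset Strict Implicit. Unset Printing Implicit Defensive.
Import Order.TTheory GRing.Theory Num.Theory.
Local Open Scope ring_scope.

Definition eucl_dist (R : realType) (d : nat) (p q : 'rV[R]_d) : R :=
  Num.sqrt (\sum_(i < d) (p 0 i - q 0 i) ^+ 2).

(* A finite simple graph on vertex set 'I_n (labels 1..n shifted to 0..n-1). *)
Definition simple_graph (n : nat) (e : rel 'I_n) : Prop :=
  irreflexive e /\ symmetric e.

Definition representable (R : realType) (d : nat) (e : rel 'I_(d.+2)) (k : R)
  : Prop :=
  exists (p : 'I_(d.+2) -> 'rV[R]_d) (a1 a2 : R),
    injective p /\ a2 < a1 /\ a1 / a2 = k /\
    (forall i j, i != j -> eucl_dist (p i) (p j) = a1 \/ eucl_dist (p i) (p j) = a2) /\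
    (exists i j, i != j /\ eucl_dist (p i) (p j) = a1) /\
    (exists i j, i != j /\ eucl_dist (p i) (p j) = a2) /\
    (forall i j, i != j -> (e i j <-> eucl_dist (p i) (p j) = a1)).

Definition BG (R : realType) (n : nat) (e : rel 'I_n) (k : R) : 'M[R]_n :=
  \matrix_(i < n, j < n)
    (if i == j then 0 else if e i j then - k ^+ 2 else -1).

Definition ones (R : realType) (n : nat) : 'cV[R]_n := const_mx 1.
Definition in_ones_perp (R : realType) (n : nat) (w : 'cV[R]_n) : Prop :=
  (ones R n)^T *m w = 0.

From mathcomp Require Import all_boot all_order all_algebra reals.
From mathcomp Require Import ring lra.
Set Implicit Arguments. Unset Strict Implicit. Unset Printing Implicit Defensive.
Import Order.TTheory GRing.Theory Num.Theory.
Local Open Scope ring_scope.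

(* Put D := - B_G(k).  G is representable exactly when D is the matrix of
   squared distances of d+2 points of R^d, normalised so that a2 = 1, and
   some pair of vertices is adjacent and some pair is not.
   For points forming the rows of P, D = s 1^T + 1 s^T - 2 P P^T with s the
   squared norms.  Hence w^T B w = 2 |P^T w|^2 for w in 1^perp, and any
   nonzero w in the left kernel of [1 | P] (which exists because d+2 > d+1)
   has B w in R 1.
   Conversely, let T v := v - (1^T v) e_0.  The matrix Q := T^T B T / 2 is
   the Gram matrix that the configuration would have with point 0 at the
   origin.  It is positive semidefinite because T maps into 1^perp, and it
   kills both e_0 and the given w, so a Cholesky factorisation writes
   Q = X X^T with only d columns; the rows of X realise D.  Finally, B w in
   R 1 with w nonzero in 1^perp is impossible when B is constant off the
   diagonal, so both distances occur. *)

Local Notation "''1_' n" := (const_mx 1 : 'cV_n)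
  (at level 8, n at level 2, format "''1_' n").

Section BlockAlgebra.
Variable R : comPzRingType.

Lemma trmx11 (A : 'M[R]_1) : A^T = A.
Proof. by rewrite [A]mx11_scalar tr_scalar_mx. Qed.

Lemma trmx_mul_cV n (u v : 'cV[R]_n) : u^T *m v = v^T *m u.
Proof. by rewrite -[LHS]trmx11 trmx_mul trmxK. Qed.

Lemma qform_outer n (c u : 'cV[R]_n) :
  (u^T *m (c *m c^T) *m u) 0 0 = (c^T *m u) 0 0 ^+ 2.
Proof. by rewrite mulmxA -mulmxA (trmx_mul_cV u) [LHS]mxE big_ord1 expr2. Qed.

Lemma qform_block n (a t : R) (c u : 'cV[R]_n) (H : 'M[R]_n) :
  ((col_mx t%:M u)^T *m block_mx a%:M c^T c H *m col_mx t%:M u) 0 0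
  = a * t ^+ 2 + 2 * t * (c^T *m u) 0 0 + (u^T *m H *m u) 0 0.
Proof.
rewrite tr_col_mx tr_scalar_mx mul_row_block mul_row_col !mulmxDl.
rewrite !mul_scalar_mx !mul_mx_scalar -scalemxAl (trmx_mul_cV u).
by rewrite !mxE eqxx /=; ring.
Qed.

Lemma symmx_block n (G : 'M[R]_(1 + n)) : G^T = G ->
  G = block_mx (G 0 0)%:M (dlsubmx G)^T (dlsubmx G) (drsubmx G).
Proof.
move=> sG; rewrite -{1}[G]submxK; congr block_mx.
- by rewrite [ulsubmx G]mx11_scalar !mxE; congr (G _ _)%:M; apply: val_inj.
- by rewrite trmx_dlsub sG.
Qed.

Lemma symmx_block0 n (G : 'M[R]_(1 + n)) : G^T = G -> (forall i, G i 0 = 0) ->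
  G = block_mx 0 0 0 (drsubmx G).
Proof.
move=> sG G0; have dG : dlsubmx G = 0.
  apply/matrixP => i j; rewrite !mxE ord1.
  by have -> : lshift n (0 : 'I_1) = 0 by apply: val_inj.
by rewrite {1}(symmx_block sG) G0 raddf0 dG trmx0.
Qed.

Lemma perp_dsubmx_neq0 n (w : 'cV[R]_(1 + n)) :
  ('1_(1 + n))^T *m w = 0 -> w != 0 -> dsubmx w != 0.
Proof.
move=> w1; apply: contraNneq => u0; move: w1.
rewrite -[w]vsubmxK u0 -col_mx_const tr_col_mx mul_row_col mulmx0 addr0.
move/matrixP/(_ 0 0); rewrite mxE big_ord1 [_^T _ _]mxE [const_mx _ _ _]mxE mul1r.
by rewrite [RHS]mxE => w0; rewrite [usubmx w]mx11_scalar w0 raddf0 col_mx0.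
Qed.

End BlockAlgebra.

Section SquaredDistances.
Variable R : comPzRingType.

Definition sqdistmx n d (P : 'M[R]_(n, d)) : 'M[R]_n :=
  \matrix_(i, j) \sum_l (P i l - P j l) ^+ 2.

Lemma sqdistmxE n d (P : 'M[R]_(n, d)) i j :
  sqdistmx P i j = (P *m P^T) i i + (P *m P^T) j j - 2 * (P *m P^T) i j.
Proof.
rewrite !mxE mulr_sumr -!big_split -sumrB; apply: eq_bigr => l _.
by rewrite !mxE /=; ring.
Qed.

Lemma sqdistmx_gram n d (P : 'M[R]_(n, d)) :
  sqdistmx P = \col_i (P *m P^T) i i *m ('1_n)^T
             + '1_n *m (\col_i (P *m P^T) i i)^T - 2 *: (P *m P^T).
Proof.
by apply/matrixP => i j; rewrite sqdistmxE !mxE !big_ord1 !mxE mulr1 mul1r.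
Qed.

Lemma qform_sqdistmx n d (P : 'M[R]_(n, d)) (w : 'cV[R]_n) :
  ('1_n)^T *m w = 0 ->
  w^T *m sqdistmx P *m w = - (2 *: ((P^T *m w)^T *m (P^T *m w))).
Proof.
move=> w1; have w1' : w^T *m '1_n = 0 by rewrite trmx_mul_cV w1.
rewrite sqdistmx_gram !mulmxDr !mulmxDl mulmxN mulNmx.
rewrite !mulmxA w1' -!mulmxA w1 !mulmx0 !mul0mx !add0r -scalemxAl -scalemxAr.
by rewrite trmx_mul trmxK !mulmxA.
Qed.

Lemma sqdistmx_mul_const n d (P : 'M[R]_(n, d)) (w : 'cV[R]_n) :
  ('1_n)^T *m w = 0 -> P^T *m w = 0 ->
  exists gamma, sqdistmx P *m w = gamma *: '1_n.
Proof.
move=> w1 Pw; exists (((\col_i (P *m P^T) i i)^T *m w) 0 0).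
rewrite sqdistmx_gram !mulmxDl mulNmx -!mulmxA w1 -scalemxAl -mulmxA Pw.
by rewrite !mulmx0 scaler0 subr0 add0r {1}[_^T *m w]mx11_scalar mul_mx_scalar.
Qed.

End SquaredDistances.

Section Translation.
Variables (R : comPzRingType) (n : nat).
Local Notation e0 := (delta_mx 0 0 : 'cV[R]_n.+1).

(* [transl0mx^T *m P] translates the configuration P so that its point 0
   lies at the origin. *)
Definition transl0mx : 'M[R]_n.+1 := 1%:M - e0 *m ('1_n.+1)^T.

Lemma ones_delta0 : ('1_n.+1)^T *m e0 = 1.
Proof. by apply/matrixP => i j; rewrite !ord1 -colE !mxE. Qed.

Lemma ones_transl0 : ('1_n.+1)^T *m transl0mx = 0.
Proof. by rewrite mulmxBr mulmx1 mulmxA ones_delta0 mul1mx subrr. Qed.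

Lemma transl0_perp (w : 'cV[R]_n.+1) :
  ('1_n.+1)^T *m w = 0 -> transl0mx *m w = w.
Proof. by move=> w1; rewrite mulmxBl mul1mx -mulmxA w1 mulmx0 subr0. Qed.

Lemma transl0_mxE (B : 'M[R]_n.+1) i j :
  (transl0mx^T *m B *m transl0mx) i j = B i j - B 0 j - B i 0 + B 0 0.
Proof.
rewrite /transl0mx [_^T]raddfB /= tr_scalar_mx trmx_mul trmxK trmx_delta.
rewrite mulmxBl mul1mx !mulmxBr !mulmx1 -!mulmxA -rowE !mulmxA -colE.
by rewrite !mxE !big_ord1 !mxE big_ord1 !mxE; ring.
Qed.

End Translation.

Section Semidefinite.
Variable R : realDomainType.

Definition psdmx n (A : 'M[R]_n) :=
  forall v : 'cV[R]_n, 0 <= (v^T *m A *m v) 0 0.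

Definition cpsdmx n (A : 'M[R]_n) :=
  forall v : 'cV[R]_n, ('1_n)^T *m v = 0 -> 0 <= (v^T *m A *m v) 0 0.

Lemma cV_norm2E n (c : 'cV[R]_n) : (c^T *m c) 0 0 = \sum_i c i 0 ^+ 2.
Proof. by rewrite mxE; apply: eq_bigr => i _; rewrite mxE expr2. Qed.

Lemma cV_norm2_ge0 n (c : 'cV[R]_n) : 0 <= (c^T *m c) 0 0.
Proof. by rewrite cV_norm2E sumr_ge0 // => i _; apply: sqr_ge0. Qed.

Lemma cV_norm2_eq0 n (c : 'cV[R]_n) : (c^T *m c) 0 0 = 0 -> c = 0.
Proof.
rewrite cV_norm2E => /eqP; rewrite psumr_eq0 => [/allP c0|i _]; last exact: sqr_ge0.
apply/matrixP => i j; rewrite ord1 mxE; apply/eqP.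
by rewrite -sqrf_eq0; apply: c0; rewrite mem_index_enum.
Qed.

Lemma cpsdmx_sqdistmx n d (P : 'M[R]_(n, d)) : cpsdmx (- sqdistmx P).
Proof.
move=> v v1; rewrite mulmxN mulNmx qform_sqdistmx // opprK mxE.
by rewrite mulr_ge0 ?ler0n ?cV_norm2_ge0.
Qed.

End Semidefinite.

Section LowDimension.
Variable F : fieldType.

Lemma left_ker_neq0 m n (A : 'M[F]_(m, n)) : (n < m)%N ->
  exists2 v : 'rV[F]_m, v != 0 & v *m A = 0.
Proof.
move=> nm; have /rowV0Pn[v /sub_kermxP vA v_neq0] : kermx A != 0.
  by rewrite kermx_eq0 /row_free neq_ltn (leq_ltn_trans (rank_leq_col A)).
by exists v.
Qed.

Lemma exists_sqdistmx_mul_const n d (P : 'M[F]_(n, d)) : (d.+1 < n)%N ->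
  exists w : 'cV[F]_n, [/\ w != 0, ('1_n)^T *m w = 0 &
    exists gamma, sqdistmx P *m w = gamma *: '1_n].
Proof.
move=> dn; have [v v_neq0] := left_ker_neq0 (row_mx '1_n P) dn.
rewrite mul_mx_row -(row_mx0 _ 1 1 d) => /eq_row_mx[v1 vP].
have w1 : ('1_n)^T *m v^T = 0 by rewrite -trmx_mul v1 trmx0.
exists v^T; split => //; first by rewrite trmx_eq0.
by apply: sqdistmx_mul_const; rewrite // -trmx_mul vP trmx0.
Qed.

End LowDimension.

Section SchurComplement.
Variable R : realFieldType.

Lemma affine_ge0_slope0 (a b : R) : (forall t, 0 <= a * t + b) -> a = 0.
Proof.
move=> ge0; apply/eqP; apply: contraT => a0.
by have := ge0 (- (b + 1) / a); rewrite mulrC divfK //; lra.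
Qed.

Variables (n : nat) (a : R) (c : 'cV[R]_n) (H : 'M[R]_n).
Let G := block_mx a%:M c^T c H.
Let S := H - a^-1 *: (c *m c^T).

Lemma psdmx_block_pivot : psdmx G -> 0 <= a /\ (a = 0 -> c = 0).
Proof.
move=> pG; split.
  have := pG (col_mx 1%:M 0).
  by rewrite qform_block trmx0 mul0mx !mulmx0 !mxE; lra.
move=> a0; apply: cV_norm2_eq0.
have /eqP : 2 * (c^T *m c) 0 0 = 0.
  apply: (@affine_ge0_slope0 _ ((c^T *m H *m c) 0 0)) => t.
  by have := pG (col_mx t%:M c); rewrite qform_block a0; lra.
by rewrite mulf_eq0 pnatr_eq0 => /eqP.
Qed.

Lemma psdmx_drsub : psdmx G -> psdmx H.
Proof.
move=> pG u; have := pG (col_mx 0%:M u).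
by rewrite qform_block expr0n /= !mulr0 mul0r !add0r.
Qed.

Lemma trmx_schur : H^T = H -> S^T = S.
Proof. by move=> sH; rewrite linearB /= sH linearZ /= trmx_mul trmxK. Qed.

Lemma schur_ker u : G *m col_mx (0 : 'M_1) u = 0 -> S *m u = 0.
Proof.
rewrite mul_block_col !mulmx0 !add0r -(col_mx0 _ 1 n 1) => /eq_col_mx[cu Hu].
by rewrite /S mulmxBl Hu -scalemxAl -mulmxA cu mulmx0 scaler0 subr0.
Qed.

Lemma psdmx_schur : psdmx G -> psdmx S.
Proof.
move=> pG u; set s := (c^T *m u) 0 0.
have := pG (col_mx (- (a^-1 * s))%:M u); rewrite qform_block -/s.
have -> : (u^T *m S *m u) 0 0 = (u^T *m H *m u) 0 0 - a^-1 * s ^+ 2.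
  rewrite /S mulmxBr mulmxBl -scalemxAr -scalemxAl.
  by rewrite mxE [X in _ + X]mxE [X in _ - X]mxE qform_outer.
have [->|a_neq0] := eqVneq a 0; first by rewrite invr0 !mul0r oppr0; lra.
have -> : a * (- (a^-1 * s)) ^+ 2 + 2 * - (a^-1 * s) * s = - (a^-1 * s ^+ 2).
  by field.
lra.
Qed.

(* A kernel vector with nonzero first entry makes row 0 of G a combination of
   the other rows, so the factor of H needs no extra column. *)
Lemma gram_block_ker p (w0 : R) (u : 'cV[R]_n) (Y : 'M[R]_(n, p)) :
  H = Y *m Y^T -> w0 != 0 -> G *m col_mx w0%:M u = 0 ->
  exists X : 'M[R]_(1 + n, p), G = X *m X^T.
Proof.
move=> HY w0_neq0; rewrite mul_block_col -[0]col_mx0 => /eq_col_mx[/eqP + /eqP].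
rewrite addrC addr_eq0 => /eqP cu; rewrite addrC addr_eq0 mul_mx_scalar => /eqP Hu.
set A := - w0^-1 *: (u^T *m Y).
have AYt : A *m Y^T = c^T.
  have sH : H^T = H by rewrite HY trmx_mul trmxK.
  rewrite -scalemxAl -mulmxA -HY -sH -trmx_mul Hu.
  by rewrite linearN /= linearZ /= scalerN scaleNr opprK scalerA mulVf ?scale1r.
have YAt : Y *m A^T = c by rewrite -[Y]trmxK -trmx_mul AYt trmxK.
exists (col_mx A Y); rewrite tr_col_mx mul_col_row -HY AYt YAt.
rewrite {1}/A -scalemxAl -mulmxA YAt trmx_mul_cV cu -scalar_mxM.
by rewrite scalerN scaleNr opprK scale_scalar_mx mulrCA mulVf ?mulr1.
Qed.

End SchurComplement.

Section Cholesky.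
Variable R : rcfType.

Lemma gram_block n p (a : R) (c : 'cV[R]_n) (H : 'M[R]_n) (Y : 'M[R]_(n, p)) :
  psdmx (block_mx a%:M c^T c H) -> H - a^-1 *: (c *m c^T) = Y *m Y^T ->
  exists X : 'M[R]_(1 + n, 1 + p), block_mx a%:M c^T c H = X *m X^T.
Proof.
move=> pG SY; have [a_ge0 a0c0] := psdmx_block_pivot pG.
set s := Num.sqrt a; have ss : s * s = a by rewrite -expr2 sqr_sqrtr.
have sc : (s * s^-1) *: c = c.
  have [a0|a_neq0] := eqVneq a 0; first by rewrite a0c0 // scaler0.
  by rewrite divff ?scale1r // sqrtr_eq0 -ltNge lt_def a_neq0.
exists (block_mx s%:M 0 (s^-1 *: c) Y).
rewrite tr_block_mx mulmx_block !tr_scalar_mx trmx0 !mulmx0 !mul0mx !addr0.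
rewrite -scalar_mxM ss -SY mul_scalar_mx mul_mx_scalar !scalerA sc.
rewrite -linearZ /= scalerA sc -scalemxAl linearZ /= -scalemxAr scalerA -invfM ss.
by rewrite addrC subrK.
Qed.

Lemma psdmx_gram n (G : 'M[R]_n) : G^T = G -> psdmx G ->
  exists X : 'M[R]_n, G = X *m X^T.
Proof.
elim: n G => [|n IH] G sG pG; first by exists 0; rewrite [LHS]flatmx0 [RHS]flatmx0.
change 'M[R]_(1 + n) in G.
have sH : (drsubmx G)^T = drsubmx G by rewrite trmx_drsub sG.
rewrite (symmx_block sG) in pG *.
have [|Y SY] := IH _ _ (psdmx_schur pG); first exact: trmx_schur.
exact: gram_block SY.
Qed.

Lemma psdmx_gram_ker n (G : 'M[R]_n.+1) (w : 'cV[R]_n.+1) :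
  G^T = G -> psdmx G -> w != 0 -> G *m w = 0 ->
  exists X : 'M[R]_(n.+1, n), G = X *m X^T.
Proof.
elim: n G w => [|n IH] G w sG pG w_neq0 Gw.
  exists 0; rewrite mul0mx; move/matrixP/(_ 0 0): Gw; rewrite !mxE big_ord1.
  move/eqP; rewrite mulf_eq0 => /orP[/eqP G0|/eqP w0].
    by apply/matrixP => i j; rewrite !ord1 G0 mxE.
  suff w_eq0 : w = 0 by rewrite w_eq0 eqxx in w_neq0.
  by apply/matrixP => i j; rewrite !ord1 w0 mxE.
change 'M[R]_(1 + n.+1) in G; change 'cV[R]_(1 + n.+1) in w.
have sH : (drsubmx G)^T = drsubmx G by rewrite trmx_drsub sG.
rewrite (symmx_block sG) in pG Gw *.
rewrite -[w]vsubmxK [usubmx w]mx11_scalar in Gw w_neq0.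
move: (usubmx w 0 0) (dsubmx w) Gw w_neq0 => w0 u Gw w_neq0.
have [w00|w0_neq0] := eqVneq w0 0; last first.
  have [Y HY] := psdmx_gram sH (psdmx_drsub pG).
  exact: gram_block_ker HY w0_neq0 Gw.
move: Gw w_neq0; rewrite w00 raddf0 => Gw w_neq0.
have u_neq0 : u != 0 by apply: contraNneq w_neq0 => ->; rewrite col_mx0.
have [|Y SY] := IH _ u _ (psdmx_schur pG) u_neq0 (schur_ker Gw).
  exact: trmx_schur.
exact: gram_block SY.
Qed.

End Cholesky.

Section GramAtOrigin.
Variable R : realFieldType.

(* For B = - sqdistmx P this is the Gram matrix of P translated so that its
   point 0 lies at the origin. *)
Definition gram0mx n (B : 'M[R]_(1 + n)) : 'M[R]_(1 + n) :=
  2^-1 *: ((transl0mx R n)^T *m B *m transl0mx R n).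

Variables (n : nat) (B : 'M[R]_(1 + n)).
Hypotheses (sB : B^T = B) (B0 : forall i, B i i = 0).

Lemma gram0mxE i j : gram0mx B i j = 2^-1 * (B i j - B 0 j - B i 0 + B 0 0).
Proof. by rewrite mxE transl0_mxE. Qed.

Lemma gram0_col0 i : gram0mx B i 0 = 0.
Proof. by rewrite gram0mxE; field. Qed.

Lemma trmx_gram0 : (gram0mx B)^T = gram0mx B.
Proof. by rewrite /gram0mx linearZ /= !trmx_mul trmxK sB mulmxA. Qed.

Lemma psdmx_gram0 : cpsdmx B -> psdmx (gram0mx B).
Proof.
move=> pB v; rewrite /gram0mx -scalemxAr -scalemxAl mxE.
set T := transl0mx R n.
have -> : v^T *m (T^T *m B *m T) *m v = (T *m v)^T *m B *m (T *m v).
  by rewrite trmx_mul !mulmxA.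
by rewrite mulr_ge0 ?invr_ge0 ?ler0n ?pB // mulmxA ones_transl0 mul0mx.
Qed.

Lemma gram0_ker (w : 'cV[R]_(1 + n)) gamma :
  ('1_(1 + n))^T *m w = 0 -> B *m w = gamma *: '1_(1 + n) ->
  gram0mx B *m w = 0.
Proof.
move=> w1 Bw; rewrite /gram0mx -scalemxAl -!mulmxA transl0_perp // Bw -scalemxAr.
by rewrite -[X in _ *m X]trmxK -trmx_mul ones_transl0 trmx0 !scaler0.
Qed.

Lemma sqdistmx_gram0 d (X : 'M[R]_(1 + n, d)) :
  gram0mx B = X *m X^T -> sqdistmx X = - B.
Proof.
have Bsym i j : B j i = B i j by rewrite -[in LHS]sB mxE.
move=> GX; apply/matrixP => i j; rewrite sqdistmxE -GX !gram0mxE !B0 mxE.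
by rewrite (Bsym 0 i) (Bsym 0 j); field.
Qed.

End GramAtOrigin.

Lemma sqdistmx_of_cpsdmx (R : rcfType) m (B : 'M[R]_(1 + m.+1))
    (w : 'cV[R]_(1 + m.+1)) gamma :
  B^T = B -> (forall i, B i i = 0) -> cpsdmx B ->
  w != 0 -> ('1_(1 + m.+1))^T *m w = 0 -> B *m w = gamma *: '1_(1 + m.+1) ->
  exists X : 'M[R]_(1 + m.+1, m), sqdistmx X = - B.
Proof.
move=> sB B0 pB w_neq0 w1 Bw.
have GH := symmx_block0 (trmx_gram0 sB) (gram0_col0 B).
set H := drsubmx _ in GH.
have sH : H^T = H by rewrite /H trmx_drsub trmx_gram0.
have pH : psdmx H.
  apply: (@psdmx_drsub _ _ 0 0); rewrite raddf0 trmx0 -GH.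
  exact: psdmx_gram0.
have Hu : H *m dsubmx w = 0.
  have := gram0_ker w1 Bw.
  rewrite GH -{1}[w]vsubmxK mul_block_col !mul0mx !add0r -(col_mx0 _ 1 m.+1 1).
  by case/eq_col_mx.
have [Y HY] := psdmx_gram_ker sH pH (perp_dsubmx_neq0 w1 w_neq0) Hu.
exists (col_mx 0 Y); apply: sqdistmx_gram0 => //.
by rewrite GH tr_col_mx mul_col_row HY trmx0 !mul0mx mulmx0.
Qed.

Lemma const_offdiag_ker (R : numFieldType) n (c gamma : R) (w : 'cV[R]_n.+1) :
  c != 0 -> ('1_n.+1)^T *m w = 0 ->
  c *: ('1_n.+1 *m ('1_n.+1)^T - 1%:M) *m w = gamma *: '1_n.+1 -> w = 0.
Proof.
move=> c_neq0 w1; rewrite -scalemxAl mulmxBl -mulmxA w1 mulmx0 mul1mx sub0r scalerN.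
move=> E; have wE : w = (- (gamma / c)) *: '1_n.+1.
  by apply: (scalerI c_neq0); rewrite scalerA mulrN mulrC divfK // scaleNr -E opprK.
move: w1; rewrite wE -scalemxAr => /matrixP/(_ 0 0) /eqP.
rewrite !mxE (eq_bigr (fun=> 1)) => [|j _]; last by rewrite !mxE mulr1.
by rewrite sumr_const card_ord mulf_eq0 pnatr_eq0 orbF => /eqP->; rewrite scale0r.
Qed.

Lemma eucl_dist_row (R : realType) n d (P : 'M[R]_(n, d)) i j :
  eucl_dist (row i P) (row j P) = Num.sqrt (sqdistmx P i j).
Proof.
by rewrite /eucl_dist mxE; congr Num.sqrt; apply: eq_bigr => l _; rewrite !mxE.
Qed.

Section BGmatrix.
Variables (R : realType) (n : nat) (e : rel 'I_n.+1) (k : R).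
Local Notation B := (BG e k).

Lemma trmx_BG : symmetric e -> B^T = B.
Proof. by move=> e_sym; apply/matrixP => i j; rewrite !mxE eq_sym e_sym. Qed.

Lemma BG_diag i : B i i = 0.
Proof. by rewrite mxE eqxx. Qed.

Lemma BG_const (b : bool) : (forall i j, i != j -> e i j = b) ->
  B = - (if b then k ^+ 2 else 1) *: ('1_n.+1 *m ('1_n.+1)^T - 1%:M).
Proof.
move=> eb; apply/matrixP => i j; rewrite !mxE big_ord1 !mxE mulr1.
have [_|ij] := eqVneq i j; first by rewrite subrr mulr0.
by rewrite (eb _ _ ij) subr0 mulr1; case: (b).
Qed.

Lemma edges_of_BG_ker (w : 'cV[R]_n.+1) gamma : k != 0 ->
  w != 0 -> ('1_n.+1)^T *m w = 0 -> B *m w = gamma *: '1_n.+1 ->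
  (exists i j, i != j /\ e i j) /\ (exists i j, i != j /\ ~~ e i j).
Proof.
move=> k_neq0 w_neq0 w1 Bw.
have not_const b : ~ (forall i j, i != j -> e i j = b).
  move=> /BG_const BE; move/eqP: w_neq0; apply.
  apply: (@const_offdiag_ker _ _ (- (if b then k ^+ 2 else 1)) gamma) => //.
    by rewrite oppr_eq0; case: (b); rewrite ?oner_eq0 ?sqrf_eq0.
  by rewrite -BE.
split.
  case: (pickP (fun ij => (ij.1 != ij.2) && e ij.1 ij.2)) => [[i j] /andP[]|none].
    by exists i, j.
  exfalso; apply: (not_const false) => i j ij.
  by have := none (i, j); rewrite /= ij.
case: (pickP (fun ij => (ij.1 != ij.2) && ~~ e ij.1 ij.2)) => [[i j] /andP[]|none].
  by exists i, j.
exfalso; apply: (not_const true) => i j ij.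
by have := none (i, j); rewrite /= ij => /negbFE.
Qed.

End BGmatrix.

Section Representation.
Variables (R : realType) (d : nat) (e : rel 'I_d.+2) (k : R).
Hypothesis k_gt1 : 1 < k.
Local Notation B := (BG e k).
Let k_gt0 : 0 < k := lt_trans ltr01 k_gt1.

Lemma representable_sqdistmx :
  representable e k -> exists P : 'M[R]_(d.+2, d), sqdistmx P = - B.
Proof.
move=> [p [a1 [a2 [_ [_ [a12k [dist12 [_ [[i2 [j2 [_ d2]]] eP]]]]]]]]].
have a2_gt0 : 0 < a2.
  have a2_ge0 : 0 <= a2 by rewrite -d2 sqrtr_ge0.
  rewrite lt_def a2_ge0 andbT; apply: contraTneq k_gt1 => a20.
  by rewrite -a12k a20 invr0 mulr0 ltr10.
pose P := \matrix_(i, l) (p i 0 l / a2).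
exists P; apply/matrixP => i j; rewrite [LHS]mxE [RHS]mxE.
have [<-|ij] := eqVneq i j.
  by rewrite BG_diag oppr0 big1 // => l _; rewrite subrr expr0n.
have -> : \sum_l (P i l - P j l) ^+ 2 = (eucl_dist (p i) (p j) / a2) ^+ 2.
  rewrite expr_div_n sqr_sqrtr ?sumr_ge0 // => [|l _]; last exact: sqr_ge0.
  by rewrite mulr_suml; apply: eq_bigr => l _; rewrite !mxE -mulrBl expr_div_n.
case eij: (e i j); rewrite mxE (negbTE ij) eij opprK.
  by rewrite ((eP i j ij).1 eij) a12k.
case: (dist12 i j ij) => [/(eP i j ij).2|->]; first by rewrite eij.
by rewrite divff ?gt_eqF // expr1n.
Qed.

Lemma sqdistmx_representable (P : 'M[R]_(d.+2, d)) :
  sqdistmx P = - B ->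
  (exists i j, i != j /\ e i j) -> (exists i j, i != j /\ ~~ e i j) ->
  representable e k.
Proof.
move=> DP [i1 [j1 [ij1 e1]]] [i2 [j2 [ij2 e2]]].
have dist_row i j :
    i != j -> eucl_dist (row i P) (row j P) = if e i j then k else 1.
  move=> ij; rewrite eucl_dist_row DP !mxE (negbTE ij).
  by case: (e i j); rewrite opprK ?sqrtr1 // sqrtr_sqr ger0_norm // ltW.
exists (fun i => row i P), k, 1; split.
  move=> i j Pij; apply/eqP; apply: contraT => ij; move: (dist_row i j ij).
  rewrite Pij /eucl_dist big1 ?sqrtr0 => [|l _]; last by rewrite subrr expr0n.
  by case: (e i j) => /esym/eqP; rewrite ?oner_eq0 // gt_eqF.
split; first exact: k_gt1.
split; first exact: divr1.
split; first by move=> i j ij; rewrite dist_row //; case: (e i j); [left|right].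
split; first by exists i1, j1; rewrite dist_row // e1.
split; first by exists i2, j2; rewrite dist_row // (negbTE e2).
move=> i j ij; rewrite dist_row //; case: (e i j) => //.
by split=> // /eqP; rewrite lt_eqF.
Qed.

End Representation.

Theorem proposition3p2 (R : realType) (d : nat) (e : rel 'I_(d.+2)) (k : R) :
  simple_graph e -> 1 < k ->
  (representable e k <->
   ((forall w : 'cV[R]_(d.+2), in_ones_perp w ->
       0 <= (w^T *m BG e k *m w) 0 0) /\
    (exists (w : 'cV[R]_(d.+2)) (gamma : R),
       w != 0 /\ in_ones_perp w /\ BG e k *m w = gamma *: ones R (d.+2)))).
Proof.
move=> [_ e_sym] k_gt1; split.
  case/(representable_sqdistmx k_gt1) => P DP.
  have BE : BG e k = - sqdistmx P by rewrite DP opprK.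
  split; first by rewrite BE; apply: cpsdmx_sqdistmx.
  have [w [w_neq0 w1 [gamma Dw]]] := exists_sqdistmx_mul_const P (ltnSn d.+1).
  by exists w, (- gamma); rewrite BE mulNmx Dw scaleNr.
move=> [pB [w [gamma [w_neq0 [w1 Bw]]]]].
have [P DP] := sqdistmx_of_cpsdmx (trmx_BG k e_sym) (BG_diag e k) pB w_neq0 w1 Bw.
have k_neq0 : k != 0 by rewrite gt_eqF // (lt_trans ltr01 k_gt1).
have [E N] := edges_of_BG_ker k_neq0 w_neq0 w1 Bw.
exact: sqdistmx_representable DP E N.
Qed.
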